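(* Let $n \ge 3$ and let $\mathbf{Y}_1^A,\dots,\mathbf{Y}_{N_A}^A \in \mathbb{R}^n$ be the observed sample vectors of the $N_A$ variables (voxels) of a region $A$, none of them constant. For $i,i'\in\{1,\dots,N_A\}$ let $r^{A,A}_{i,i'} = \widehat{Cor}(\mathbf{Y}_i^A,\mathbf{Y}_{i'}^A)$ denote their sample Pearson correlation, and let $\mathbf{U}_1^A,\dots,\mathbf{U}_{N_A}^A$ be their U-scores. Apply agglomerative hierarchical clustering with Ward's linkage to the U-scores $\mathbf{U}_1^A,\dots,\mathbf{U}_{N_A}^A$, and cut the resulting dendrogram at a fixed height $h_A \ge 0$. Then for every cluster $\nu_A$ thus obtained (with $|\nu_A|$ its number of elements, and indices $i,i'$ ranging over the voxels in $\nu_A$), $$1 - \frac{h_A^2}{2} \;\le\; \frac{1}{|\nu_A|^2}\sum_{i,i' \in \nu_A} r^{A,A}_{i,i'} \;\le\; 1 .$$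
   Context: Sample correlation: for $\mathbf{a},\mathbf{b}\in\mathbb{R}^n$ with means $\bar a,\bar b$, let $\mathbf{a}^c=\mathbf{a}-\bar a\mathbf{1}_n$, $\mathbf{b}^c=\mathbf{b}-\bar b\mathbf{1}_n$; $\widehat{Cov}(\mathbf{a},\mathbf{b})=n^{-1}\langle\mathbf{a}^c,\mathbf{b}^c\rangle$, $\widehat{Var}(\mathbf{a})=n^{-1}\|\mathbf{a}^c\|^2$, $\widehat{Cor}(\mathbf{a},\mathbf{b})=\widehat{Cov}(\mathbf{a},\mathbf{b})/\sqrt{\widehat{Var}(\mathbf{a})\widehat{Var}(\mathbf{b})}$. U-scores: the U-score of $\mathbf{Y}_i^A$ is $\mathbf{U}_i^A=\mathbf{H}^T\mathbf{Z}_i^A\in\mathbb{R}^{n-1}$, where $\mathbf{Z}_i^A$ is the standardized (centered and normalized to unit Euclidean norm) version of $\mathbf{Y}_i^A$ and $\mathbf{H}$ is a fixed matrix with orthonormal columns spanning the orthogonal complement of $\mathbf{1}_n$ (obtained by Gram–Schmidt); U-scores lie on the unit sphere and satisfy $\widehat{Cor}(\mathbf{Y}_i,\mathbf{Y}_j)=\mathbf{U}_i^T\mathbf{U}_j = 1-\|\mathbf{U}_i-\mathbf{U}_j\|^2/2$. Ward's linkage: the distance between two clusters $\nu_1,\nu_2$ of U-scores is $D(\nu_1,\nu_2)=\sqrt{\frac{2|\nu_1||\nu_2|}{|\nu_1|+|\nu_2|}\,\|\overline{\mathbf{U}}^{\nu_1}-\overline{\mathbf{U}}^{\nu_2}\|^2}$,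 where $\overline{\mathbf{U}}^{\nu}$ is the centroid of cluster $\nu$; agglomerative clustering repeatedly merges the two clusters at smallest linkage distance, and cutting the dendrogram at height $h_A$ means retaining only merges performed at heights at most $h_A$, yielding the clusters. *)

From HB Require Import structures.
From mathcomp Require Import all_boot all_order all_algebra.
Set Implicit Arguments. Unset Strict Implicit. Unset Printing Implicit Defensive.
Import Order.TTheory GRing.Theory Num.Theory.
Local Open Scope ring_scope.

Section Defs.
Variable R : rcfType.

Section Stats.
Variable n : nat.

Definition ones : 'rV[R]_n := const_mx 1.
Definition dotv (a b : 'rV[R]_n) : R := \sum_(j < n) a 0 j * b 0 j.
Definition sample_mean (a : 'rV[R]_n) : R := (\sum_(j < n) a 0 j) / n%:R.
Definition centered (a : 'rV[R]_n) : 'rV[R]_n := a - sample_mean a *: ones.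
Definition sample_cov (a b : 'rV[R]_n) : R := dotv (centered a) (centered b) / n%:R.
Definition sample_var (a : 'rV[R]_n) : R := sample_cov a a.
Definition sample_cor (a b : 'rV[R]_n) : R :=
  sample_cov a b / Num.sqrt (sample_var a * sample_var b).
Definition standardized (a : 'rV[R]_n) : 'rV[R]_n :=
  (Num.sqrt (dotv (centered a) (centered a)))^-1 *: centered a.
Definition nonconstant (a : 'rV[R]_n) : Prop := exists j j' : 'I_n, a 0 j != a 0 j'.

Definition orth_complement_basis (H : 'M[R]_(n, n.-1)) : Prop :=
  H^T *m H = 1%:M /\ ones *m H = 0.
(* U-score (row-vector convention: U = Z H, i.e. the transpose of H^T Z) *)
Definition uscore (H : 'M[R]_(n, n.-1)) (a : 'rV[R]_n) : 'rV[R]_(n.-1) :=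
  standardized a *m H.
End Stats.

Section Ward.
Variables (m N : nat) (U : 'I_N -> 'rV[R]_m).

Definition sqnorm (v : 'rV[R]_m) : R := \sum_(j < m) v 0 j ^+ 2.
Definition centroid (nu : {set 'I_N}) : 'rV[R]_m :=
  (#|nu|%:R)^-1 *: \sum_(i in nu) U i.
Definition ward_dist (nu1 nu2 : {set 'I_N}) : R :=
  Num.sqrt ((2 * #|nu1|%:R * #|nu2|%:R) / (#|nu1|%:R + #|nu2|%:R)
            * sqnorm (centroid nu1 - centroid nu2)).

Definition ward_step (P Q : {set {set 'I_N}}) (A B : {set 'I_N}) : Prop :=
  [/\ A \in P, B \in P, A != B,
      (forall A' B', A' \in P -> B' \in P -> A' != B' ->
         ward_dist A B <= ward_dist A' B')
    & Q = (P :\: [set A; B]) :|: [set A :|: B]].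

(* a full run: start from singletons, perform the N-1 merges; the k-th merge
   joins A k and B k at height ward_dist (A k) (B k) *)
Definition ward_run (P : nat -> {set {set 'I_N}}) (A B : nat -> {set 'I_N}) : Prop :=
  P 0%N = [set [set i] | i : 'I_N] /\
  forall k, (k < N.-1)%N -> ward_step (P k) (P k.+1) (A k) (B k).

(* cutting the dendrogram at height h: keep only merges of height <= h;
   two points lie in the same cluster iff they are linked by kept merges *)
Definition kept_link (A B : nat -> {set 'I_N}) (h : R) : rel 'I_N :=
  fun a b => [exists k : 'I_N.-1,
    (ward_dist (A k) (B k) <= h) && (((a \in A k) && (b \in B k)) || ((b \in A k) && (a \in B k)))].
Definition cut_cluster (A B : nat -> {set 'I_N}) (h : R) (i : 'I_N) : {set 'I_N} :=
  [set j | connect (kept_link A B h) i j].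
End Ward.
End Defs.

From HB Require Import structures.
From mathcomp Require Import all_boot all_order all_algebra ring lra.
Set Implicit Arguments. Unset Strict Implicit. Unset Printing Implicit Defensive.
Import Order.TTheory GRing.Theory Num.Theory.
Local Open Scope ring_scope.

(* The Gram matrix of the U-scores is the correlation matrix and the U-scores
   are unit vectors, so the mean correlation within a cluster S is the squared
   norm of its centroid, i.e. 1 - W(S)/|S| where W is the within-cluster sum
   of squares.  Ward's identity W(S u T) = W(S) + W(T) + D(S,T)^2/2 says that
   every merge adds half its squared height to W.  By the Lance-Williams
   formula the merge heights are nondecreasing, so cutting at h yields exactly
   the clusters present before the first merge above h; each of them was built
   by |S| - 1 merges of height at most h, whence 0 <= W(S) <= (|S| - 1) h^2/2. *)

Section DotProduct.
Variables (R : rcfType) (m : nat).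
Implicit Types (u v w : 'rV[R]_m) (k : R).

Lemma dotvE u v : dotv u v = (u *m v^T) 0 0.
Proof. by rewrite mxE; apply: eq_bigr => j _; rewrite mxE. Qed.

Lemma dotvC u v : dotv u v = dotv v u.
Proof. by apply: eq_bigr => j _; rewrite mulrC. Qed.

Lemma dotvDl u v w : dotv (u + v) w = dotv u w + dotv v w.
Proof. by rewrite -big_split; apply: eq_bigr => j _; rewrite mxE mulrDl. Qed.

Lemma dotvNl u v : dotv (- u) v = - dotv u v.
Proof. by rewrite -sumrN; apply: eq_bigr => j _; rewrite mxE mulNr. Qed.

Lemma dotvZl k u v : dotv (k *: u) v = k * dotv u v.
Proof. by rewrite mulr_sumr; apply: eq_bigr => j _; rewrite mxE mulrA. Qed.

Lemma dotvBl u v w : dotv (u - v) w = dotv u w - dotv v w.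
Proof. by rewrite dotvDl dotvNl. Qed.

Lemma dotvDr u v w : dotv u (v + w) = dotv u v + dotv u w.
Proof. by rewrite !(dotvC u) dotvDl. Qed.

Lemma dotvBr u v w : dotv u (v - w) = dotv u v - dotv u w.
Proof. by rewrite !(dotvC u) dotvBl. Qed.

Lemma dotvZr k u v : dotv u (k *: v) = k * dotv u v.
Proof. by rewrite !(dotvC u) dotvZl. Qed.

Lemma dotv_suml (I : finType) (X : {set I}) (F : I -> 'rV[R]_m) v :
  dotv (\sum_(i in X) F i) v = \sum_(i in X) dotv (F i) v.
Proof.
elim/big_rec2: _ => [|i x y _ <-]; last by rewrite dotvDl.
by rewrite /dotv big1 // => j _; rewrite mxE mul0r.
Qed.

Lemma dotv_sumr (I : finType) (X : {set I}) (F : I -> 'rV[R]_m) u :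
  dotv u (\sum_(i in X) F i) = \sum_(i in X) dotv u (F i).
Proof. by rewrite dotvC dotv_suml; apply: eq_bigr => i _; rewrite dotvC. Qed.

Lemma sqnorm_dotv v : sqnorm v = dotv v v.
Proof. by apply: eq_bigr => j _; rewrite expr2. Qed.

Lemma sqnorm_ge0 v : 0 <= sqnorm v.
Proof. by apply: sumr_ge0 => j _; rewrite sqr_ge0. Qed.

Lemma sqnormB u v : sqnorm (u - v) = sqnorm u - 2 * dotv u v + sqnorm v.
Proof. rewrite !sqnorm_dotv dotvBl !dotvBr (dotvC v u); ring. Qed.

Lemma sqnormZ k v : sqnorm (k *: v) = k ^+ 2 * sqnorm v.
Proof. by rewrite !sqnorm_dotv dotvZl dotvZr mulrA expr2. Qed.

(* Stewart's theorem for the barycentre of p and q with weights a and b. *)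
Lemma sqnorm_wmeanB (a b : R) (p q r : 'rV[R]_m) : a + b != 0 ->
  (a + b) * sqnorm ((a + b)^-1 *: (a *: p + b *: q) - r)
  = a * sqnorm (p - r) + b * sqnorm (q - r) - a * b / (a + b) * sqnorm (p - q).
Proof.
move=> ab0; rewrite !sqnormB !sqnormZ !sqnorm_dotv.
rewrite !(dotvZl, dotvDl, dotvZr, dotvDr) (dotvC q p) (dotvC p r) (dotvC q r).
by field.
Qed.

End DotProduct.

Lemma sum_setU_disjoint (I : finType) (V : nmodType) (S T : {set I}) (F : I -> V) :
  [disjoint S & T] -> \sum_(i in S :|: T) F i = \sum_(i in S) F i + \sum_(i in T) F i.
Proof. by move=> dST; rewrite -bigU //; apply: eq_bigl => i; rewrite inE. Qed.

Lemma card_setU_disjoint (I : finType) (S T : {set I}) :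
  [disjoint S & T] -> #|S :|: T| = (#|S| + #|T|)%N.
Proof. by move=> /disjoint_setI0 dST; rewrite cardsU dST cards0 subn0. Qed.

Lemma partition_singletons (T : finType) : partition [set [set x] | x : T] [set: T].
Proof.
apply/and3P; split.
- apply/eqP/setP => x; rewrite inE; apply/bigcupP.
  by exists [set x]; rewrite ?imset_f ?set11.
- apply/trivIsetP => _ _ /imsetP[x _ ->] /imsetP[y _ ->] ne_xy.
  by rewrite disjoints1 inE; apply: contraNneq ne_xy => ->.
- by apply/imsetP => -[x _ /setP/(_ x)]; rewrite !inE eqxx.
Qed.

Lemma partition_merge (T : finType) (P : {set {set T}}) (D A B : {set T}) :
  partition P D -> A \in P -> B \in P -> A != B ->
  partition ((P :\: [set A; B]) :|: [set A :|: B]) D.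
Proof.
move=> PD AP BP AB.
have BPA : B \in P :\ A by rewrite !inE eq_sym AB.
have PD2 := partitionD1 (partitionD1 PD AP) BPA.
have AB0 : A :|: B != set0 by rewrite setU_eq0 negb_and (partition_neq0 PD AP).
have ABD : A :|: B \subset D by rewrite subUset !(partitionS PD).
have dis : [disjoint A :|: B & (D :\: A) :\: B].
  by rewrite setDDl disjoints_subset setDE setCI setCK subsetUr.
have := partitionU1 PD2 AB0 dis.
have covD : (A :|: B) :|: D :\: (A :|: B) = D.
  apply/setP => x; rewrite !inE; move: (subsetP ABD x); rewrite !inE.
  by case: (x \in A); case: (x \in B); case: (x \in D) => // ->.
by rewrite !setDDl covD [_ |: _]setUC.
Qed.

Section ClusterGeometry.
Variables (R : rcfType) (m N : nat) (U : 'I_N -> 'rV[R]_m).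
Implicit Types (X S T C : {set 'I_N}).

Definition scatter X : R := \sum_(i in X) sqnorm (U i - centroid U X).

Lemma sum_centroid X : \sum_(i in X) U i = #|X|%:R *: centroid U X.
Proof.
have [-> | X0] := eqVneq X set0; first by rewrite big_set0 cards0 scale0r.
by rewrite scalerA divff ?scale1r // pnatr_eq0 cards_eq0.
Qed.

Lemma scatterE X :
  scatter X = \sum_(i in X) sqnorm (U i) - #|X|%:R * sqnorm (centroid U X).
Proof.
rewrite /scatter; under eq_bigr do rewrite sqnormB.
rewrite !big_split /= sumrN sumr_const -mulr_sumr -dotv_suml sum_centroid dotvZl.
by rewrite -sqnorm_dotv -mulr_natl; ring.
Qed.

Lemma scatter_ge0 X : 0 <= scatter X.
Proof. by apply: sumr_ge0 => i _; apply: sqnorm_ge0. Qed.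

Lemma scatter_set1 i : scatter [set i] = 0.
Proof.
by rewrite scatterE /centroid !big_set1 cards1 invr1 scale1r mul1r subrr.
Qed.

Lemma centroid_setU S T : [disjoint S & T] ->
  centroid U (S :|: T) = (#|S|%:R + #|T|%:R)^-1 *:
    (#|S|%:R *: centroid U S + #|T|%:R *: centroid U T).
Proof.
move=> dST; rewrite [LHS]/centroid sum_setU_disjoint // !sum_centroid.
by rewrite card_setU_disjoint // natrD.
Qed.

Lemma ward_dist_ge0 S T : 0 <= ward_dist U S T.
Proof. exact: sqrtr_ge0. Qed.

Lemma ward_dist_sqr S T : ward_dist U S T ^+ 2 =
  2 * #|S|%:R * #|T|%:R / (#|S|%:R + #|T|%:R) * sqnorm (centroid U S - centroid U T).
Proof. by rewrite sqr_sqrtr // mulr_ge0 ?sqnorm_ge0 ?divr_ge0 ?mulr_ge0 ?addr_ge0. Qed.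

Lemma ward_distC S T : ward_dist U S T = ward_dist U T S.
Proof.
rewrite /ward_dist (addrC #|T|%:R) (mulrAC 2 #|T|%:R) !sqnorm_dotv !dotvBl !dotvBr.
by rewrite (dotvC (centroid U T)); congr (Num.sqrt (_ * _)); ring.
Qed.

Lemma scatter_setU S T : [disjoint S & T] -> S != set0 ->
  scatter (S :|: T) = scatter S + scatter T + ward_dist U S T ^+ 2 / 2.
Proof.
move=> dST S0; have ab0 : #|S|%:R + #|T|%:R != 0 :> R.
  by rewrite -natrD pnatr_eq0 addn_eq0 cards_eq0 negb_and S0.
rewrite !scatterE ward_dist_sqr sum_setU_disjoint // centroid_setU //.
rewrite card_setU_disjoint // natrD.
have := sqnorm_wmeanB (centroid U S) (centroid U T) 0 ab0; rewrite !subr0 => ->.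
by field.
Qed.

Lemma lance_williams S T C : [disjoint S & T] -> S != set0 -> C != set0 ->
  (#|S|%:R + #|T|%:R + #|C|%:R) * ward_dist U (S :|: T) C ^+ 2 =
  (#|S|%:R + #|C|%:R) * ward_dist U S C ^+ 2
  + (#|T|%:R + #|C|%:R) * ward_dist U T C ^+ 2 - #|C|%:R * ward_dist U S T ^+ 2.
Proof.
move=> dST S0 C0; rewrite !ward_dist_sqr centroid_setU // card_setU_disjoint // natrD.
have a0 : 0 < #|S|%:R :> R by rewrite ltr0n card_gt0.
have c0 : 0 < #|C|%:R :> R by rewrite ltr0n card_gt0.
have b0 : 0 <= #|T|%:R :> R by [].
move: (centroid U S) (centroid U T) (centroid U C) => p q r.
move: #|S|%:R #|T|%:R #|C|%:R a0 b0 c0 => a b c a0 b0 c0.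
have ab0 : a + b != 0 by apply: lt0r_neq0; lra.
have abc0 : a + b + c != 0 by apply: lt0r_neq0; lra.
have ac0 : a + c != 0 by apply: lt0r_neq0; lra.
have bc0 : b + c != 0 by apply: lt0r_neq0; lra.
set g := (a + b)^-1 *: _.
rewrite [LHS](_ : _ = 2 * c * ((a + b) * sqnorm (g - r))); last by field.
by rewrite /g sqnorm_wmeanB //; field; rewrite ab0 bc0 ac0.
Qed.

Lemma ward_dist_setU_ge S T C : [disjoint S & T] -> S != set0 -> C != set0 ->
  ward_dist U S T <= ward_dist U S C -> ward_dist U S T <= ward_dist U T C ->
  ward_dist U S T <= ward_dist U (S :|: T) C.
Proof.
move=> dST S0 C0.
have le_sqr X Y X' Y' : (ward_dist U X Y <= ward_dist U X' Y') =
    (ward_dist U X Y ^+ 2 <= ward_dist U X' Y' ^+ 2).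
  by rewrite ler_sqr // nnegrE ward_dist_ge0.
rewrite !le_sqr.
have := lance_williams dST S0 C0.
have a0 : 0 < #|S|%:R :> R by rewrite ltr0n card_gt0.
have c0 : 0 < #|C|%:R :> R by rewrite ltr0n card_gt0.
have b0 : 0 <= #|T|%:R :> R by [].
move: (ward_dist U S T ^+ 2) (ward_dist U S C ^+ 2) (ward_dist U T C ^+ 2).
move: (ward_dist U (S :|: T) C ^+ 2) => d x y z.
move: #|S|%:R #|T|%:R #|C|%:R a0 b0 c0 => a b c a0 b0 c0 LW le_xy le_xz.
have abc0 : 0 < a + b + c by lra.
rewrite -(ler_pM2l abc0) LW.
have : 0 <= (a + c) * (y - x) by rewrite mulr_ge0 ?subr_ge0 //; lra.
have : 0 <= (b + c) * (z - x) by rewrite mulr_ge0 ?subr_ge0 //; lra.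
lra.
Qed.

Lemma mean_dotv_unit X : X != set0 -> {in X, forall i, sqnorm (U i) = 1} ->
  (#|X|%:R ^+ 2)^-1 * \sum_(i in X) \sum_(j in X) dotv (U i) (U j)
  = 1 - scatter X / #|X|%:R.
Proof.
move=> X0 unitX; have s0 : #|X|%:R != 0 :> R by rewrite pnatr_eq0 cards_eq0.
rewrite (_ : \sum_(i in X) _ = dotv (\sum_(i in X) U i) (\sum_(j in X) U j)); last first.
  by rewrite dotv_suml; apply: eq_bigr => i _; rewrite dotv_sumr.
rewrite scatterE (eq_bigr (fun=> 1) unitX) sumr_const sum_centroid dotvZl dotvZr.
by rewrite -sqnorm_dotv; field.
Qed.

End ClusterGeometry.

Section UScores.
Variables (R : rcfType) (n : nat).
Hypothesis n_gt0 : (0 < n)%N.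

Lemma sample_corE (a b : 'rV[R]_n) :
  sample_cor a b = dotv (standardized a) (standardized b).
Proof.
rewrite /sample_cor /sample_var /sample_cov /standardized dotvZl dotvZr.
have n0 : n%:R != 0 :> R by rewrite pnatr_eq0 -lt0n.
set x := dotv (centered a) (centered a); set y := dotv (centered b) (centered b).
have [x0 y0] : 0 <= x /\ 0 <= y by split; apply: sumr_ge0 => j _; rewrite -expr2 sqr_ge0.
rewrite (_ : x / _ * _ = x * y * n%:R^-1 ^+ 2); last by rewrite expr2 mulrACA.
rewrite sqrtrM ?mulr_ge0 // sqrtr_sqr ger0_norm ?invr_ge0 ?ler0n // sqrtrM //.
rewrite !invfM invrK; set sx := (Num.sqrt x)^-1; set sy := (Num.sqrt y)^-1.
by field.
Qed.

Lemma sqnorm_standardized (a : 'rV[R]_n) : nonconstant a -> sqnorm (standardized a) = 1.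
Proof.
case=> j [j' ne_jj']; rewrite sqnorm_dotv /standardized dotvZl dotvZr mulrA -expr2.
have x_ge0 : 0 <= dotv (centered a) (centered a).
  by apply: sumr_ge0 => k _; rewrite -expr2 sqr_ge0.
rewrite exprVn sqr_sqrtr // mulVf //; apply: contraNneq ne_jj' => /eqP.
rewrite /dotv psumr_eq0 => [/allP c0 | k _]; last by rewrite -expr2 sqr_ge0.
have e k : a 0 k = sample_mean a.
  move: (c0 k (mem_index_enum k)).
  by rewrite -expr2 sqrf_eq0 !mxE mulr1 subr_eq0 => /eqP.
by rewrite !e.
Qed.

Lemma ones_neq0 : ones R n != 0.
Proof.
apply/eqP => /matrixP /(_ 0 (Ordinal n_gt0)).
by rewrite !mxE => /eqP; rewrite oner_eq0.
Qed.

Lemma dotv_centered_ones (a : 'rV[R]_n) : dotv (centered a) (ones R n) = 0.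
Proof.
rewrite /dotv; under eq_bigr do rewrite !mxE !mulr1.
rewrite sumrB sumr_const card_ord /sample_mean -[_ *+ n]mulr_natr divfK ?subrr //.
by rewrite pnatr_eq0 -lt0n.
Qed.

Variable H : 'M[R]_(n, n.-1).
Hypothesis hH : orth_complement_basis H.

Lemma kermx_sub_ones : (kermx H <= ones R n)%MS.
Proof.
case: hH => HtH onesH.
have rkH : \rank H = n.-1.
  apply/eqP; rewrite eqn_leq rank_leq_col /=.
  by rewrite -{1}(mxrank1 R n.-1) -HtH mxrankM_maxr.
have onesK : (ones R n <= kermx H)%MS by apply/sub_kermxP.
rewrite -(mxrank_leqif_sup onesK).2 rank_rV ones_neq0 mxrank_ker rkH.
by rewrite -{1}(prednK n_gt0) subSnn.
Qed.

Lemma orth_complement_basis_proj (v : 'rV[R]_n) :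
  dotv v (ones R n) = 0 -> v *m H *m H^T = v.
Proof.
move=> v1; case: hH => HtH onesH.
set w := v - v *m H *m H^T.
have /sub_rVP[c wc] : (w <= ones R n)%MS.
  apply: submx_trans kermx_sub_ones; apply/sub_kermxP.
  by rewrite /w mulmxBl -!mulmxA HtH mulmx1 subrr.
have w1 : dotv w (ones R n) = 0.
  by rewrite /w dotvBl v1 sub0r dotvE -!mulmxA -trmx_mul onesH trmx0 !mulmx0 mxE oppr0.
have c0 : c = 0.
  move: w1; rewrite wc dotvZl (_ : dotv _ _ = n%:R); last first.
    by rewrite /dotv; under eq_bigr do rewrite mxE mulr1; rewrite sumr_const card_ord.
  by move/eqP; rewrite mulf_eq0 pnatr_eq0 eqn0Ngt n_gt0 orbF => /eqP.
by apply/esym/eqP; rewrite -subr_eq0 -/w wc c0 scale0r.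
Qed.

Lemma dotv_uscore (a b : 'rV[R]_n) : dotv (uscore H a) (uscore H b) = sample_cor a b.
Proof.
rewrite sample_corE dotvE /uscore trmx_mul mulmxA orth_complement_basis_proj -?dotvE //.
by rewrite /standardized dotvZl dotv_centered_ones mulr0.
Qed.

End UScores.

Section WardRun.
Variables (R : rcfType) (m N : nat) (U : 'I_N -> 'rV[R]_m).
Variables (P : nat -> {set {set 'I_N}}) (A B : nat -> {set 'I_N}).
Hypothesis run : ward_run U P A B.

Local Notation height k := (ward_dist U (A k) (B k)).

Lemma mem_ward_run k S : (k < N.-1)%N -> (S \in P k.+1) =
  (S \in P k) && (S != A k) && (S != B k) || (S == A k :|: B k).
Proof.
move=> lt_k; case: (run.2 k lt_k) => _ _ _ _ ->; rewrite !inE.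
by case: (S \in P k); case: (S == A k); case: (S == B k).
Qed.

Lemma partition_ward_run k : (k <= N.-1)%N -> partition (P k) [set: 'I_N].
Proof.
elim: k => [_ | k IHk lt_k]; first by rewrite run.1 partition_singletons.
case: (run.2 k lt_k) => AP BP neAB _ ->.
exact: partition_merge (IHk (ltnW lt_k)) AP BP neAB.
Qed.

Lemma ward_height_step k : (k.+1 < N.-1)%N -> height k <= height k.+1.
Proof.
move=> lt_k1; have lt_k := ltnW lt_k1.
have PD := partition_ward_run (ltnW lt_k).
have /trivIsetP dis := partition_trivIset PD.
have nz S : S \in P k -> S != set0 := partition_neq0 PD.
case: (run.2 k lt_k) => AP BP neAB min_k _.
case: (run.2 k.+1 lt_k1); rewrite !mem_ward_run //.
case/orP => [/andP[/andP[A'P neA'A] neA'B] | /eqP->];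
  case/orP => [/andP[/andP[B'P neB'A] neB'B] | /eqP->] neA'B' _ _.
- exact: min_k.
- rewrite [X in _ <= X]ward_distC; apply: ward_dist_setU_ge; rewrite ?dis ?nz //;
    by apply: min_k; rewrite // eq_sym.
- apply: ward_dist_setU_ge; rewrite ?dis ?nz //;
    by apply: min_k; rewrite // eq_sym.
- by move: neA'B'; rewrite eqxx.
Qed.

Lemma ward_height_homo i j : (i <= j)%N -> (j < N.-1)%N -> height i <= height j.
Proof.
move=> le_ij lt_j.
apply: (@homo_leq_in _ [pred k | (k < N.-1)%N] (fun k => height k) (fun x y => x <= y))
  => //; first exact: le_trans.
- by move=> a b _ lt_b c /andP[_ lt_cb]; rewrite inE (ltn_trans lt_cb).
- by move=> a _; apply: ward_height_step.
- exact: leq_ltn_trans lt_j.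
Qed.

Lemma pblock_ward_step k i :
  (k < N.-1)%N -> pblock (P k) i \subset pblock (P k.+1) i.
Proof.
move=> lt_k; have PD := partition_ward_run (ltnW lt_k).
have iS : i \in pblock (P k) i by rewrite mem_pblock (cover_partition PD) inE.
have into T : T \in P k.+1 -> pblock (P k) i \subset T ->
    pblock (P k) i \subset pblock (P k.+1) i.
  move=> TP sST; have tiP := partition_trivIset (partition_ward_run lt_k).
  by rewrite (def_pblock tiP TP) // (subsetP sST).
have ABP : A k :|: B k \in P k.+1 by rewrite mem_ward_run // eqxx orbT.
have [eA | neA] := eqVneq (pblock (P k) i) (A k).
  by apply: into ABP _; rewrite eA subsetUl.
have [eB | neB] := eqVneq (pblock (P k) i) (B k).
  by apply: into ABP _; rewrite eB subsetUr.
apply: into (subxx _).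
by rewrite mem_ward_run // neA neB pblock_mem // (cover_partition PD) inE.
Qed.

Lemma pblock_ward_run k k' i :
  (k <= k')%N -> (k' <= N.-1)%N -> pblock (P k) i \subset pblock (P k') i.
Proof.
move=> le_kk' le_k'.
apply: (@homo_leq_in _ [pred k | (k <= N.-1)%N] (fun k => pblock (P k) i)
          (fun S T => S \subset T)) => //.
- by move=> S T C; apply: subset_trans.
- by move=> a b _ le_b c /andP[_ lt_cb]; rewrite inE (leq_trans (ltnW lt_cb)).
- by move=> a _; apply: pblock_ward_step.
- exact: leq_trans le_k'.
Qed.

Variable h : R.

Definition kept_merges : nat := find (fun k => h < height k) (iota 0 N.-1).

Lemma kept_merges_le : (kept_merges <= N.-1)%N.
Proof. by rewrite /kept_merges -[X in (_ <= X)%N](size_iota 0 N.-1) find_size. Qed.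

Lemma ward_height_le_cut k : (k < N.-1)%N -> (height k <= h) = (k < kept_merges)%N.
Proof.
move=> lt_k; have [lt_kK | le_Kk] := ltnP k kept_merges.
  by have := before_find 0%N lt_kK; rewrite nth_iota // add0n ltNge => /negbFE.
have lt_K : (kept_merges < N.-1)%N := leq_ltn_trans le_Kk lt_k.
have has_K : has (fun k => h < height k) (iota 0 N.-1) by rewrite has_find size_iota.
have := nth_find 0%N has_K; rewrite -/kept_merges nth_iota // add0n => lt_hK.
by apply/negbTE; rewrite -ltNge (lt_le_trans lt_hK) // ward_height_homo.
Qed.

Local Notation cutP := (P kept_merges).
Local Notation kept := (kept_link U A B h).

Lemma kept_link_pblock a b : kept a b -> pblock cutP a = pblock cutP b.
Proof.
case/existsP => k /andP[le_kh link_ab]; have lt_k := ltn_ord k.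
have lt_kK : (k < kept_merges)%N by rewrite -ward_height_le_cut.
have ABP : A k :|: B k \in P k.+1 by rewrite mem_ward_run // eqxx orbT.
have sub x : x \in A k :|: B k -> A k :|: B k \subset pblock cutP x.
  move=> xAB; have tiP := partition_trivIset (partition_ward_run lt_k).
  rewrite -(def_pblock tiP ABP xAB).
  exact: pblock_ward_run lt_kK kept_merges_le.
have [aAB bAB] : a \in A k :|: B k /\ b \in A k :|: B k.
  by case/orP: link_ab => /andP[? ?]; rewrite !inE; split; apply/orP; auto.
apply: same_pblock (partition_trivIset (partition_ward_run kept_merges_le)) _.
exact: subsetP (sub b bAB) a aAB.
Qed.

Lemma connect_ward_block k S i j : (k <= kept_merges)%N -> S \in P k ->
  i \in S -> j \in S -> connect kept i j.
Proof.
elim: k S i j => [|k IHk] S i j le_kK.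
  by rewrite run.1 => /imsetP[x _ ->]; rewrite !inE => /eqP-> /eqP->.
have lt_k : (k < N.-1)%N := leq_trans le_kK kept_merges_le.
rewrite mem_ward_run // => /orP[/andP[/andP[SP _] _] | /eqP->].
  exact: IHk (ltnW le_kK) SP.
have le_kh : height k <= h by rewrite ward_height_le_cut.
have link a b : a \in A k -> b \in B k -> kept a b && kept b a.
  by move=> aA bB; apply/andP; split; apply/existsP; exists (Ordinal lt_k);
    rewrite /= le_kh aA bB ?orbT.
case: (run.2 k lt_k) => AP BP _ _ _.
rewrite !inE => /orP[iA | iB] /orP[jA | jB].
- exact: IHk _ i j (ltnW le_kK) AP iA jA.
- by apply: connect1; case/andP: (link _ _ iA jB).
- by apply: connect1; case/andP: (link _ _ jA iB).
- exact: IHk _ i j (ltnW le_kK) BP iB jB.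
Qed.

Lemma cut_cluster_pblock i : cut_cluster U A B h i = pblock cutP i.
Proof.
have PD := partition_ward_run kept_merges_le.
have tiP := partition_trivIset PD.
have iP x : x \in pblock cutP x by rewrite mem_pblock (cover_partition PD) inE.
apply/setP => j; rewrite inE; apply/idP/idP => [conn_ij | jP].
  have closed_i : closed kept (pblock cutP i).
    move=> x y /kept_link_pblock xy.
    by rewrite -!eq_pblock ?(cover_partition PD) ?inE // xy.
  by rewrite -(closed_connect closed_i conn_ij) iP.
apply: connect_ward_block (leqnn _) (pblock_mem _) (iP i) jP.
by rewrite (cover_partition PD) inE.
Qed.

Lemma scatter_ward_block k S : (k <= kept_merges)%N -> S \in P k ->
  scatter U S <= (#|S|%:R - 1) * h ^+ 2 / 2.
Proof.
elim: k S => [|k IHk] S le_kK.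
  by rewrite run.1 => /imsetP[i _ ->]; rewrite scatter_set1 cards1 subrr !mul0r.
have lt_k : (k < N.-1)%N := leq_trans le_kK kept_merges_le.
rewrite mem_ward_run // => /orP[/andP[/andP[SP _] _] | /eqP->].
  exact: IHk (ltnW le_kK) SP.
have PD := partition_ward_run (ltnW lt_k).
case: (run.2 k lt_k) => AP BP neAB _ _.
have dAB : [disjoint A k & B k] by move/trivIsetP: (partition_trivIset PD); apply.
rewrite scatter_setU ?(partition_neq0 PD) // card_setU_disjoint // natrD.
have le_kh : height k <= h by rewrite ward_height_le_cut.
have h0 : 0 <= h := le_trans (ward_dist_ge0 _ _ _) le_kh.
have le_sq : height k ^+ 2 <= h ^+ 2 by rewrite ler_sqr ?nnegrE ?ward_dist_ge0.
have := IHk _ (ltnW le_kK) AP; have := IHk _ (ltnW le_kK) BP; lra.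
Qed.

End WardRun.

Theorem theorem1 (R : rcfType) (n NA : nat) (hn : (3 <= n)%N)
    (Y : 'I_NA -> 'rV[R]_n) (hY : forall i, nonconstant (Y i))
    (H : 'M[R]_(n, n.-1)) (hH : orth_complement_basis H)
    (P : nat -> {set {set 'I_NA}}) (A B : nat -> {set 'I_NA})
    (hrun : ward_run (fun i => uscore H (Y i)) P A B)
    (hA : R) (hA0 : 0 <= hA) (i0 : 'I_NA) :
  let nu := cut_cluster (fun i => uscore H (Y i)) A B hA i0 in
  1 - hA ^+ 2 / 2
    <= (#|nu|%:R ^+ 2)^-1 * \sum_(i in nu) \sum_(i' in nu) sample_cor (Y i) (Y i')
  /\ (#|nu|%:R ^+ 2)^-1 * \sum_(i in nu) \sum_(i' in nu) sample_cor (Y i) (Y i') <= 1.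
Proof.
move=> nu; set U := fun i => uscore H (Y i).
have n_gt0 : (0 < n)%N by apply: leq_trans hn.
have unitU i : i \in nu -> sqnorm (U i) = 1.
  by rewrite sqnorm_dotv dotv_uscore // sample_corE // -sqnorm_dotv sqnorm_standardized.
have PK := partition_ward_run hrun (kept_merges_le U A B hA).
have nuP : nu \in P (kept_merges U A B hA).
  by rewrite /nu (cut_cluster_pblock hrun) pblock_mem // (cover_partition PK) inE.
have nu0 := partition_neq0 PK nuP.
have s_gt0 : 0 < #|nu|%:R :> R by rewrite ltr0n card_gt0.
under eq_bigr do under eq_bigr do rewrite -(dotv_uscore n_gt0 hH).
rewrite (mean_dotv_unit nu0 unitU).
have := scatter_ward_block hrun (leqnn _) nuP; have := scatter_ge0 U nu.
move: (scatter U nu) (hA ^+ 2) (sqr_ge0 hA) => W t t0 W0 W1.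
have : W / #|nu|%:R <= t / 2 by rewrite ler_pdivrMr //; lra.
have : 0 <= W / #|nu|%:R by rewrite divr_ge0 // ltW.
lra.
Qed.
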